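(* Let $q$ be a prime power, $e\ge 2$ even, $r$ a positive integer, $a\in\mathbb{F}_{q^e}$ with $a\neq 0$, $f(x)=x^r(x^{q-1}+a)$, and $\ell=q^{e-1}+\cdots+q+1$. If $r\bmod\ell=hq+1$ for an integer $h$ with $q+1\nmid h$, then $f(x)$ does not permute $\mathbb{F}_{q^e}$.
   Context: $r\bmod\ell$ denotes the least nonnegative residue of $r$ modulo $\ell$. *)

From mathcomp Require Import all_boot all_order all_algebra all_field.
Set Implicit Arguments. Unset Strict Implicit. Unset Printing Implicit Defensive.
Import GRing.Theory.
Local Open Scope ring_scope.

Definition prime_power (q : nat) : Prop :=
  exists p k : nat, [/\ prime p, (0 < k)%N & q = (p ^ k)%N].

Definition ell (q e : nat) : nat := (\sum_(i < e) q ^ i)%N.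

Definition fpoly_map (F : finFieldType) (q r : nat) (a : F) (x : F) : F :=
  x ^+ r * (x ^+ (q.-1) + a).

Definition permutes (F : finFieldType) (f : F -> F) : Prop := bijective f.

From mathcomp Require Import all_boot all_order all_algebra all_field.
From mathcomp Require Import fingroup cyclic zify.
Set Implicit Arguments. Unset Strict Implicit. Unset Printing Implicit Defensive.
Import GRing.Theory.

(* If f permutes F then sum_x f(x)^t = sum_x x^t for every t.  Write e = 2E
   and m = sum_(i<E) q^(2i), so that ell = (q+1)m and #|F| - 1 = (q-1)(q+1)m,
   and take t = (q-1)m: as #|F| - 1 does not divide t, sum_x x^t = 0.
   In characteristic p, (v+b)^(q-1) = sum_(j<q) v^j (-b)^(q-1-j), so
   (x^(q-1) + a)^t, a product of such powers with v = x^((q-1)q^(2i)), expands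
   into monomials x^((q-1)J) with J = sum_i j_i q^(2i), 0 <= j_i < q.  The
   power sum of x^((q-1)(rm+J)) is -1 if (q+1)m divides rm + J and 0 otherwise.
   Since r = hq+1 (mod q+1) with q+1 not dividing h, there is a d < q with
   q+1 | r+d, and then (q+1)m | rm + J exactly when every base-q^2 digit j_i
   of J equals d.  Hence sum_x f(x)^t is minus the coefficient of that single
   monomial, a nonzero product of powers of -a, a contradiction. *)

Lemma digits_inj B E (phi psi : 'I_E -> nat) : 0 < B ->
    (forall i, phi i < B) -> (forall i, psi i < B) ->
  \sum_(i < E) phi i * B ^ i = \sum_(i < E) psi i * B ^ i -> phi =1 psi.
Proof.
move=> B_gt0; elim: E phi psi => [|E IH] phi psi phi_lt psi_lt; first by move=> _ [].
rewrite !big_ord_recl !expn0 !muln1.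
under eq_bigr do rewrite expnS mulnCA.
under [in X in _ = X -> _]eq_bigr do rewrite expnS mulnCA.
rewrite -!big_distrr /= => sum_eq.
have eq0 : phi ord0 = psi ord0.
  have := congr1 (modn^~ B) sum_eq.
  by rewrite !(addnC (_ ord0)) !(mulnC B) !modnMDl !modn_small.
move: sum_eq; rewrite eq0 => /addnI /eqP; rewrite eqn_pmul2l // => /eqP sum_eq.
move=> i; case: (unliftP ord0 i) => [j ->|->] //.
exact: (IH (phi \o lift ord0) (psi \o lift ord0) (fun _ => phi_lt _) (fun _ => psi_lt _)).
Qed.

Lemma mul_add1_modn_neq1 q h : 0 < q -> ~~ (q + 1 %| h) -> (h * q + 1) %% (q + 1) != 1.
Proof.
move=> q_gt0 h_ndvd; apply: contra h_ndvd => /eqP mod1.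
have : h * q + 1 == 0 + 1 %[mod q + 1] by rewrite mod1 add0n modn_small // addn1 ltnS.
rewrite eqn_modDr mod0n => hq_dvd.
by rewrite -(@Gauss_dvdl _ _ q) /dvdn ?hq_dvd // addn1 coprimeSn.
Qed.

Lemma exists_lt_dvdn_addn q r : 0 < q -> r %% (q + 1) != 1 ->
  exists2 d, d < q & q + 1 %| r + d.
Proof.
move=> q_gt0 r_mod; have r_lt : r %% (q + 1) < q + 1 by rewrite ltn_pmod // addn1.
exists ((q + 1 - r %% (q + 1)) %% (q + 1)).
  case: (posnP (r %% (q + 1))) => [->|r_gt0]; first by rewrite subn0 modnn.
  by rewrite modn_small; move: r_mod r_gt0 r_lt; lia.
by rewrite /dvdn modnDmr -modnDml subnKC ?modnn // ltnW.
Qed.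

Lemma predn_exp_double q E :
  (q ^ (E * 2)).-1 = q.-1 * ((q + 1) * \sum_(i < E) (q ^ 2) ^ i).
Proof.
by rewrite mulnC expnM predn_exp (predn_exp q 2) !big_ord_recr big_ord0 /= mulnA addnC.
Qed.

Lemma ell_double q E : 1 < q -> ell q (E * 2) = (q + 1) * \sum_(i < E) (q ^ 2) ^ i.
Proof.
move=> q_gt1; apply/eqP; rewrite -(@eqn_pmul2l q.-1) -?predn_exp ?predn_exp_double //.
by rewrite -subn1 subn_gt0.
Qed.

Lemma sum_expn_gt0 b E : 0 < E -> 0 < \sum_(i < E) b ^ i.
Proof. by case: E => // E _; rewrite big_ord_recl expn0 addnC ltn_addl. Qed.

Section DigitDivisibility.
Variables (q E r d : nat).
Hypotheses (q_gt1 : 1 < q) (E_gt0 : 0 < E) (d_lt_q : d < q) (dvd_rd : q + 1 %| r + d).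
Let m := \sum_(i < E) (q ^ 2) ^ i.

Let m_gt0 : 0 < m. Proof. exact: sum_expn_gt0. Qed.

Lemma dvdn_shift_eqmod J :
  ((q + 1) * m %| r * m + J) = (J == d * m %[mod (q + 1) * m]).
Proof.
have [k rd_eq] := dvdnP dvd_rd.
by rewrite -(eqn_modDr (r * m)) -mulnDl (addnC d) rd_eq -mulnA modnMl (addnC J).
Qed.

Lemma sum_digits_le (phi : 'I_E -> nat) :
  (forall i, phi i < q) -> \sum_(i < E) phi i * (q ^ 2) ^ i <= q.-1 * m.
Proof.
move=> phi_lt; rewrite /m big_distrr leq_sum // => i _.
by rewrite leq_mul2r -ltnS prednK ?phi_lt ?orbT // ltnW.
Qed.

Lemma dvdn_digits_const (phi : 'I_E -> nat) : (forall i, phi i < q) ->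
  ((q + 1) * m %| r * m + \sum_(i < E) phi i * (q ^ 2) ^ i) = [forall i, phi i == d].
Proof.
move=> phi_lt; have q2_gt_q : q < q ^ 2 by rewrite -{1}(expn1 q) ltn_exp2l.
have q2_gt0 : 0 < q ^ 2 by rewrite expn_gt0 ltnW.
have lt_ell n : n <= q.-1 * m -> n < (q + 1) * m.
  by move/leq_ltn_trans; apply; rewrite ltn_pmul2r //; lia.
have dm_le : d * m <= q.-1 * m by rewrite leq_mul2r -ltnS prednK ?d_lt_q ?orbT // ltnW.
rewrite dvdn_shift_eqmod !modn_small ?lt_ell ?sum_digits_le //.
rewrite /m big_distrr; apply/eqP/forallP => [sum_eq i|phi_d].
  apply/eqP/(digits_inj q2_gt0 _ _ sum_eq) => [j|_].
    exact: ltn_trans (phi_lt j) q2_gt_q.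
  exact: ltn_trans d_lt_q q2_gt_q.
by apply: eq_bigr => i _; rewrite (eqP (phi_d i)).
Qed.

End DigitDivisibility.

Local Open Scope ring_scope.

Section FinFieldPowerSums.
Variable F : finFieldType.

Lemma natr_card : #|F|%:R = 0 :> F.
Proof. by rewrite -cardsT -FinRing.zmodXgE expg_cardG ?inE. Qed.

Lemma expf_pred_card (x : F) : x != 0 -> x ^+ #|F|.-1 = 1.
Proof.
move=> x_neq0; apply: (mulfI x_neq0).
by rewrite mulr1 -exprS prednK ?expf_card // ltnW ?finNzRing_gt1.
Qed.

Lemma finField_prim_root : exists z : F, #|F|.-1.-primitive_root z.
Proof.
have n_gt0 : (0 < #|F|.-1)%N by rewrite -subn1 subn_gt0 finNzRing_gt1.
have roots : all #|F|.-1.-unity_root (enum (predC1 (0 : F))).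
  by apply/allP => x; rewrite mem_enum => x_neq0; apply/unity_rootP/expf_pred_card.
have size_roots : (#|F|.-1 <= size (enum (predC1 (0%R : F))))%N.
  by rewrite -cardE cardC1.
have /hasP[z _ z_prim] := has_prim_root n_gt0 roots (enum_uniq _) size_roots.
by exists z.
Qed.

Lemma sum_expf_dvd n : (0 < n)%N -> (#|F|.-1 %| n)%N -> \sum_(x : F) x ^+ n = -1.
Proof.
move=> n_gt0 /dvdnP[k n_eq]; rewrite (bigD1 0) //= expr0n eqn0Ngt n_gt0 add0r.
rewrite (eq_bigr (fun _ => 1)) => [|x x_neq0]; last first.
  by rewrite n_eq mulnC exprM expf_pred_card // expr1n.
rewrite sumr_const cardC1 -subn1 natrB ?natr_card ?sub0r //.
exact: ltnW (finNzRing_gt1 F).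
Qed.

Lemma sum_expf_ndvd n : ~~ (#|F|.-1 %| n)%N -> \sum_(x : F) x ^+ n = 0.
Proof.
move=> n_ndvd; have [z z_prim] := finField_prim_root.
have z_neq0 : z != 0 by rewrite (prim_root_eq0 z_prim) -lt0n -subn1 subn_gt0 finNzRing_gt1.
have zn_neq1 : z ^+ n != 1 by rewrite -(prim_order_dvd z_prim).
set S := \sum_(x : F) x ^+ n.
have S_eq : S = z ^+ n * S.
  rewrite {1}/S (reindex_inj (mulfI z_neq0)) mulr_sumr.
  by apply: eq_bigr => x _; rewrite exprMn.
move/eqP: S_eq; rewrite -subr_eq0 -{1}[S]mul1r -mulrBl mulf_eq0 subr_eq0 eq_sym.
by rewrite (negbTE zn_neq1) => /eqP.
Qed.

End FinFieldPowerSums.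

Section FrobeniusExpansion.
Variables (R : idomainType) (q : nat).
Hypotheses (q_pchar : [pchar R].-nat q) (q_gt1 : (1 < q)%N).

Let natr_q : q%:R = 0 :> R.
Proof.
have /(pnatPpi q_pchar) pdiv_pchar : pdiv q \in \pi(q) by rewrite pi_pdiv.
by apply/eqP; rewrite -(dvdn_pcharf pdiv_pchar) pdiv_dvd.
Qed.

Lemma exprD_pred_pchar (v b : R) :
  (v + b) ^+ q.-1 = \sum_(j < q) v ^+ j * (- b) ^+ (q.-1 - j).
Proof.
have [vb0|vb_neq0] := eqVneq (v + b) 0.
  have -> : v = - b by apply/eqP; rewrite -subr_eq0 opprK vb0.
  have q1_gt0 : (0 < q.-1)%N by lia.
  rewrite addNr expr0n eqn0Ngt q1_gt0 /=.
  rewrite (eq_bigr (fun _ => (- b) ^+ q.-1)) => [|j _]; last first.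
    by rewrite -exprD subnKC //; have := ltn_ord j; lia.
  by rewrite sumr_const card_ord -[RHS]mulr_natr natr_q mulr0.
apply: (mulfI vb_neq0); rewrite -exprS prednK ?(ltnW q_gt1) //.
rewrite exprDn_pchar // addrC (addrC v).
have := subrXX (- b) v q; rewrite exprNn_pchar // -!opprD mulNr => /oppr_inj ->.
by congr (_ * _); apply: eq_bigr => j _; rewrite mulrC.
Qed.

Lemma exprD_pred_digits (Q E : nat) (y a : R) : [pchar R].-nat Q ->
  (y + a) ^+ (q.-1 * \sum_(i < E) Q ^ i) =
  \sum_(phi : {ffun 'I_E -> 'I_q})
    (\prod_(i < E) (- a ^+ (Q ^ i)) ^+ (q.-1 - phi i)) * y ^+ (\sum_(i < E) phi i * Q ^ i).
Proof.
move=> Q_pchar; rewrite mulnC exprM expr_sum -prodrXl.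
under eq_bigr => i _ do rewrite exprDn_pchar ?pnatX ?Q_pchar // exprD_pred_pchar.
rewrite bigA_distr_bigA; apply: eq_bigr => phi _.
rewrite big_split /= mulrC -prodrXr; congr (_ * _).
by apply: eq_bigr => i _; rewrite -exprM mulnC.
Qed.

End FrobeniusExpansion.

Section PowerSumOfFpolyMap.
Variables (F : finFieldType) (q E r d : nat) (a : F).
Hypotheses (q_pchar : [pchar F].-nat q) (q_gt1 : (1 < q)%N) (E_gt0 : (0 < E)%N).
Hypotheses (r_gt0 : (0 < r)%N) (cardF : #|F| = (q ^ (E * 2))%N).
Hypotheses (d_lt_q : (d < q)%N) (dvd_rd : (q + 1 %| r + d)%N).
Let m := (\sum_(i < E) (q ^ 2) ^ i)%N.

Lemma sum_expf_digits (phi : {ffun 'I_E -> 'I_q}) :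
  \sum_(x : F) x ^+ (q.-1 * (r * m + \sum_(i < E) phi i * (q ^ 2) ^ i)) =
  if [forall i, phi i == d :> nat] then -1 else 0.
Proof.
have card1 : #|F|.-1 = (q.-1 * ((q + 1) * m))%N by rewrite cardF predn_exp_double.
have q1_gt0 : (0 < q.-1)%N by lia.
have dvd_digits := dvdn_digits_const q_gt1 E_gt0 d_lt_q dvd_rd (fun i => ltn_ord (phi i)).
case: ifP => phi_d; [apply: sum_expf_dvd | apply: sum_expf_ndvd];
  rewrite ?card1 ?dvdn_pmul2l ?dvd_digits ?phi_d //.
by rewrite muln_gt0 q1_gt0 ltn_addr // muln_gt0 r_gt0 sum_expn_gt0.
Qed.

Lemma sum_fpoly_map_expr :
  \sum_(x : F) fpoly_map q r a x ^+ (q.-1 * m) =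
  - \prod_(i < E) (- a ^+ ((q ^ 2) ^ i)) ^+ (q.-1 - d).
Proof.
rewrite /fpoly_map.
under eq_bigr => x _ do rewrite exprMn exprD_pred_digits ?pnatX ?q_pchar // mulr_sumr.
rewrite exchange_big /=.
under eq_bigr => phi _.
  under eq_bigr => x _ do rewrite mulrCA -!exprM -exprD mulnCA -mulnDr.
  rewrite -mulr_sumr sum_expf_digits.
  over.
rewrite (bigD1 [ffun=> Ordinal d_lt_q]) //= [X in _ + X]big1 => [|phi phi_neq].
  rewrite ifT ?addr0 ?mulrN1; last by apply/forallP => i; rewrite ffunE.
  by congr (- _); apply: eq_bigr => i _; rewrite ffunE.
rewrite ifF ?mulr0 //; apply/negbTE; move: phi_neq; apply: contra => /forallP phi_d.
by apply/eqP/ffunP => i; apply/val_inj; rewrite ffunE; apply/eqP/phi_d.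
Qed.

End PowerSumOfFpolyMap.

Theorem proposition4p2 (F : finFieldType) (q e r h : nat) (a : F) :
  prime_power q ->
  #|F| = (q ^ e)%N ->
  (2 <= e)%N -> ~~ odd e ->
  (0 < r)%N ->
  a != 0%R ->
  (r %% ell q e)%N = (h * q + 1)%N ->
  ~~ ((q + 1) %| h)%N ->
  ~ permutes (fpoly_map q r a).
Proof.
move=> [p [k [p_pr k_gt0 q_def]]] cardF e_ge2 e_even r_gt0 a_neq0 r_mod h_ndvd f_bij.
have q_gt1 : (1 < q)%N by rewrite q_def -{1}(expn0 p) ltn_exp2l ?prime_gt1.
have q_pchar : [pchar F].-nat q.
  have p_pchar : p \in [pchar F].
    by apply: (card_finPcharP (n := k * e)); rewrite // cardF q_def expnM.
  by rewrite q_def pnatX (pnatE _ p_pr) p_pchar.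
have [E e_eq] : exists E, e = (E * 2)%N.
  by exists e./2; rewrite muln2 -{1}(odd_double_half e) (negbTE e_even).
subst e; have E_gt0 : (0 < E)%N by lia.
rewrite ell_double // in r_mod.
set m := (\sum_(i < E) (q ^ 2) ^ i)%N in r_mod *.
have m_gt0 : (0 < m)%N by exact: sum_expn_gt0.
have [d d_lt_q dvd_rd] : exists2 d, (d < q)%N & (q + 1 %| r + d)%N.
  apply: exists_lt_dvdn_addn; first lia.
  rewrite -(@modn_dvdm _ r _ (dvdn_mulr m (dvdnn (q + 1)))) r_mod mul_add1_modn_neq1 //; lia.
have sum_perm :
    \sum_(x : F) fpoly_map q r a x ^+ (q.-1 * m) = \sum_(x : F) x ^+ (q.-1 * m).
  by rewrite [RHS](reindex _ (onW_bij _ f_bij)).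
have := sum_fpoly_map_expr a q_pchar q_gt1 E_gt0 r_gt0 cardF d_lt_q dvd_rd.
rewrite sum_perm sum_expf_ndvd; last first.
  rewrite cardF predn_exp_double dvdn_pmul2l; last lia.
  by apply/negP => /(dvdn_leq m_gt0); rewrite leqNgt ltn_Pmull // addn1 ltnS ltnW.
move/esym/eqP; rewrite oppr_eq0; apply/negP/prodf_neq0 => i _.
by rewrite expf_neq0 // oppr_eq0 expf_neq0.
Qed.
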